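(* For any POVM $\{\mathcal{M}_i\}_{i\in\mathcal{O}}$ on $\mathcal{H}$, \[2K^*(\{\mathcal{M}_i\}_{i\in\mathcal{O}})=\max_{|\psi\rangle\perp|\phi\rangle}\sum_{i\in\mathcal{O}}|\mathrm{tr}(\mathcal{M}_i(\psi-\phi))|,\] where the maximum is over pairs of unit vectors with $\langle\psi|\phi\rangle=0$, and $\psi=|\psi\rangle\langle\psi|$, $\phi=|\phi\rangle\langle\phi|$.
   Context: $\mathcal{H}$ is a finite-dimensional Hilbert space of dimension at least 2, $\mathcal{D}(\mathcal{H})$ its density matrices. A POVM is a finite family $\{\mathcal{M}_i\}_{i\in\mathcal{O}}$ of positive semidefinite matrices with $\sum_i\mathcal{M}_i=I$, and $K^*(\{\mathcal{M}_i\}_{i\in\mathcal{O}})=\max_{\rho,\sigma\in\mathcal{D}(\mathcal{H})}\frac12\sum_{i\in\mathcal{O}}|\mathrm{tr}(\mathcal{M}_i(\rho-\sigma))|$. *)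

From HB Require Import structures.
From mathcomp Require Import all_boot all_order all_algebra.
From mathcomp Require Import complex.
From mathcomp Require Import reals.
Set Implicit Arguments. Unset Strict Implicit. Unset Printing Implicit Defensive.
Import Order.TTheory GRing.Theory Num.Theory.
Local Open Scope ring_scope.
Local Open Scope complex_scope.

Definition adjmx (C : numClosedFieldType) (m n : nat) (A : 'M[C]_(m, n)) : 'M[C]_(n, m) :=
  (map_mx Num.conj A)^T.

Definition psd (C : numClosedFieldType) (n : nat) (A : 'M[C]_n) : Prop :=
  A = adjmx A /\ forall x : 'cV[C]_n, 0 <= (adjmx x *m A *m x) 0 0.

Definition density (C : numClosedFieldType) (n : nat) (rho : 'M[C]_n) : Prop :=
  psd rho /\ \tr rho = 1.

Definition POVM (C : numClosedFieldType) (n : nat) (O : finType) (M : O -> 'M[C]_n) : Prop :=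
  (forall i, psd (M i)) /\ \sum_(i : O) M i = 1%:M.

Definition unit_vec (C : numClosedFieldType) (n : nat) (v : 'cV[C]_n) : Prop :=
  (adjmx v *m v) 0 0 = 1.

Definition orthogonal_vec (C : numClosedFieldType) (n : nat) (u v : 'cV[C]_n) : Prop :=
  (adjmx u *m v) 0 0 = 0.

Definition proj (C : numClosedFieldType) (n : nat) (v : 'cV[C]_n) : 'M[C]_n :=
  v *m adjmx v.

Definition dist_sum (C : numClosedFieldType) (n : nat) (O : finType) (M : O -> 'M[C]_n)
  (rho sigma : 'M[C]_n) : C :=
  \sum_(i : O) `| \tr (M i *m (rho - sigma)) |.

Definition is_max (C : numClosedFieldType) (S : C -> Prop) (v : C) : Prop :=
  S v /\ forall w, S w -> w <= v.

(* the set of values (1/2) sum_i |tr(M_i(rho - sigma))| over density matrices;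
   K^* is its maximum *)
Definition Kvals (C : numClosedFieldType) (n : nat) (O : finType) (M : O -> 'M[C]_n) (w : C) : Prop :=
  exists rho sigma, density rho /\ density sigma /\ w = 2^-1 * dist_sum M rho sigma.

Definition PureVals (C : numClosedFieldType) (n : nat) (O : finType) (M : O -> 'M[C]_n) (w : C) : Prop :=
  exists psi phi : 'cV[C]_n, unit_vec psi /\ unit_vec phi /\ orthogonal_vec psi phi /\
    w = dist_sum M (proj psi) (proj phi).

From HB Require Import structures.
From mathcomp Require Import all_boot all_order all_algebra.
From mathcomp Require Import complex reals.
From mathcomp Require Import sesquilinear spectral.
Import Order.TTheory GRing.Theory Num.Theory.
Local Open Scope ring_scope.

(* For a sign pattern s, the matrix A_s = sum_i (+/-) M_i is Hermitian, and
   sum_i |tr(M_i (rho - sigma))| is the largest of the values tr(A_s (rho - sigma)).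
   For a fixed Hermitian A, tr(A (rho - sigma)) <= lambda_max - lambda_min on density
   matrices, with equality when rho and sigma project onto eigenvectors of the two
   extreme eigenvalues; these can be chosen orthonormal since dim H >= 2.  Taking the
   best of the finitely many sign patterns yields one orthogonal pure pair attaining
   the maximum over all pairs of density matrices. *)

Section Adjoint.
Context {C : numClosedFieldType}.

Lemma adjmxE m k (A : 'M[C]_(m, k)) i j : adjmx A i j = (A j i)^*.
Proof. by rewrite /adjmx !mxE. Qed.

Lemma adjmxK m k (A : 'M[C]_(m, k)) : adjmx (adjmx A) = A.
Proof. by apply/matrixP => i j; rewrite !adjmxE conjCK. Qed.

Lemma adjmxM m k p (A : 'M[C]_(m, k)) (B : 'M[C]_(k, p)) :
  adjmx (A *m B) = adjmx B *m adjmx A.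
Proof.
apply/matrixP => i j; rewrite adjmxE !mxE rmorph_sum; apply: eq_bigr => l _.
by rewrite !adjmxE rmorphM mulrC.
Qed.

Lemma adjmxB m k (A B : 'M[C]_(m, k)) : adjmx (A - B) = adjmx A - adjmx B.
Proof. by apply/matrixP => i j; rewrite !mxE rmorphB. Qed.

Lemma trmxC_adjmx m k (A : 'M[C]_(m, k)) : (A ^t Num.conj)%sesqui = adjmx A.
Proof. by apply/matrixP => i j; rewrite !mxE. Qed.

Lemma mxtrace_adjmx m (A : 'M[C]_m) : \tr (adjmx A) = (\tr A)^*.
Proof. by rewrite /mxtrace rmorph_sum; apply: eq_bigr => i _; rewrite adjmxE. Qed.

Lemma mxtrace_herm_real {m} {H K : 'M[C]_m} :
  H = adjmx H -> K = adjmx K -> \tr (H *m K) \is Num.real.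
Proof. by move=> hH hK; rewrite CrealE -mxtrace_adjmx adjmxM -hH -hK mxtrace_mulC. Qed.

Lemma mulmx11E (D E : 'M[C]_1) : (D *m E) 0 0 = D 0 0 * E 0 0.
Proof. by rewrite !mxE big_ord1. Qed.

Lemma proj_density {m} {v : 'cV[C]_m} : unit_vec v -> density (proj v).
Proof.
move=> unit_v; split; last by rewrite /proj mxtrace_mulC trace_mx11.
split=> [|x]; first by rewrite /proj adjmxM adjmxK.
rewrite /proj mulmxA -mulmxA mulmx11E.
have -> : adjmx v *m x = adjmx (adjmx x *m v) by rewrite adjmxM adjmxK.
by rewrite adjmxE mul_conjC_ge0.
Qed.

Lemma density_diff_herm {m} {rho sigma : 'M[C]_m} :
  density rho -> density sigma -> rho - sigma = adjmx (rho - sigma).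
Proof. by move=> [[hr _] _] [[hs _] _]; rewrite adjmxB -hr -hs. Qed.

End Adjoint.

Lemma real_argmax {R : numDomainType} {I : finType} (i0 : I) (f : I -> R) :
  (forall i, f i \is Num.real) -> exists i, forall j, f j <= f i.
Proof.
move=> freal.
suff [i fi] : exists i, forall j, j \in enum I -> f j <= f i.
  by exists i => j; apply: fi; rewrite mem_enum.
elim: (enum I) => [|j s [i fi]]; first by exists i0.
have /orP [fji|fij] := real_leVge (freal j) (freal i).
  by exists i => k; rewrite inE => /orP [/eqP->|/fi].
exists j => k; rewrite inE => /orP [/eqP->//|/fi fki]; exact: le_trans fij.
Qed.

Lemma exists_ord_neq {n} (k : 'I_n) : (1 < n)%N -> exists k' : 'I_n, k' != k.
Proof.
move=> n_gt1; pose i0 := Ordinal (ltnW n_gt1); pose i1 := Ordinal n_gt1.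
case: (eqVneq i0 k) => [<-|]; last by exists i0.
by exists i1; apply/eqP => /(congr1 val).
Qed.

Section HermitianSpectrum.
Context {C : numClosedFieldType} {n : nat} {A : 'M[C]_n}.
Hypothesis hermA : A = adjmx A.

Let P := spectralmx A.
Let d k := spectral_diag A 0 k.
Let v k : 'cV[C]_n := adjmx (row k P).

Lemma spectral_mulmx_adj : P *m adjmx P = 1%:M.
Proof. by rewrite -trmxC_adjmx; apply/unitarymxP/spectral_unitarymx. Qed.

Lemma spectral_adj_mulmx : adjmx P *m P = 1%:M.
Proof.
by rewrite -trmxC_adjmx -invmx_unitary ?spectral_unitarymx // mulVmx ?spectral_unit.
Qed.

Lemma herm_hermsymmx : A \is hermsymmx.
Proof. by apply/is_hermitianmxP; rewrite expr0 scale1r trmxC_adjmx. Qed.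

Lemma herm_spectral_decomp : A = adjmx P *m diag_mx (spectral_diag A) *m P.
Proof.
have := orthomx_spectralP (hermitian_normalmx herm_hermsymmx).
by rewrite invmx_unitary ?spectral_unitarymx // trmxC_adjmx.
Qed.

Lemma herm_eigval_real k : d k \is Num.real.
Proof. by have /mxOverP := hermitian_spectral_diag_real herm_hermsymmx; apply. Qed.

Lemma eigvec_sandwich X k : (adjmx (v k) *m X *m v k) 0 0 = (P *m X *m adjmx P) k k.
Proof. by rewrite /v adjmxK -row_mul !mxE; apply: eq_bigr => l _; rewrite !mxE. Qed.

Lemma eigvec_orthonormal j k : (adjmx (v j) *m v k) 0 0 = (j == k)%:R.
Proof.
have := congr1 (fun M : 'M[C]_n => M j k) spectral_mulmx_adj; rewrite !mxE => <-.
by rewrite /v adjmxK; apply: eq_bigr => l _; rewrite !mxE.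
Qed.

Lemma mxtrace_herm_mul X :
  \tr (A *m X) = \sum_k d k * (adjmx (v k) *m X *m v k) 0 0.
Proof.
rewrite {1}herm_spectral_decomp -!mulmxA mxtrace_mulC -!mulmxA mul_diag_mx.
by apply: eq_bigr => k _; rewrite eigvec_sandwich mxE !mulmxA.
Qed.

Lemma mxtrace_herm_proj_eigvec k : \tr (A *m proj (v k)) = d k.
Proof.
rewrite mxtrace_herm_mul (bigD1 k) //= big1 => [|j /negPf neq_jk];
  rewrite /proj mulmxA -[_ *m adjmx (v k) *m _]mulmxA mulmx11E !eigvec_orthonormal.
  by rewrite eqxx !mulr1 addr0.
by rewrite neq_jk mul0r mulr0.
Qed.

Lemma density_eigweight_ge0 rho k : density rho -> 0 <= (adjmx (v k) *m rho *m v k) 0 0.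
Proof. by move=> [[_ psd_rho] _]; apply: psd_rho. Qed.

Lemma density_eigweights_sum rho :
  density rho -> \sum_k (adjmx (v k) *m rho *m v k) 0 0 = 1.
Proof.
move=> [_ tr_rho]; under eq_bigr do rewrite eigvec_sandwich.
by rewrite -[\sum_k _]/(\tr _) -mulmxA mxtrace_mulC -mulmxA spectral_adj_mulmx mulmx1.
Qed.

Lemma mxtrace_herm_density_le rho c :
  density rho -> (forall k, d k <= c) -> \tr (A *m rho) <= c.
Proof.
move=> hrho dc; rewrite mxtrace_herm_mul -[c]mulr1 -(density_eigweights_sum _ hrho).
rewrite mulr_sumr; apply: ler_sum => k _.
by apply: ler_wpM2r; [apply: density_eigweight_ge0|apply: dc].
Qed.

Lemma mxtrace_herm_density_ge rho c :
  density rho -> (forall k, c <= d k) -> c <= \tr (A *m rho).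
Proof.
move=> hrho cd; rewrite mxtrace_herm_mul -[c]mulr1 -(density_eigweights_sum _ hrho).
rewrite mulr_sumr; apply: ler_sum => k _.
by apply: ler_wpM2r; [apply: density_eigweight_ge0|apply: cd].
Qed.

Lemma herm_pure_diff_max : (2 <= n)%N ->
  exists psi phi : 'cV[C]_n,
    [/\ unit_vec psi, unit_vec phi, orthogonal_vec psi phi &
    forall rho sigma, density rho -> density sigma ->
      \tr (A *m (rho - sigma)) <= \tr (A *m (proj psi - proj phi))].
Proof.
move=> n_ge2; have i0 : 'I_n := Ordinal (ltnW n_ge2).
have [kM dkM] := real_argmax i0 d herm_eigval_real.
have dN_real k : - d k \is Num.real by rewrite rpredN herm_eigval_real.
have [km dkm] := real_argmax i0 (fun k => - d k) dN_real.
have {}dkm j : d km <= d j by rewrite -lerN2; apply: dkm.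
(* If the extreme eigenvalues share an index, the spectrum is constant and any
   other index will do; this is where 2 <= n is needed. *)
have [k2 k2M dk2] : exists2 k2, k2 != kM & d k2 = d km.
  case: (eqVneq km kM) => [eq_km|]; last by exists km.
  have [k' k'M] := exists_ord_neq kM n_ge2; exists k' => //.
  by apply/le_anti; rewrite dkm andbT eq_km dkM.
exists (v kM), (v k2); split.
- by rewrite /unit_vec eigvec_orthonormal eqxx.
- by rewrite /unit_vec eigvec_orthonormal eqxx.
- by rewrite /orthogonal_vec eigvec_orthonormal eq_sym (negbTE k2M).
move=> rho sigma hrho hsigma.
rewrite !mulmxBr !raddfB /= !mxtrace_herm_proj_eigvec dk2.
by apply: lerB; [apply: mxtrace_herm_density_le|apply: mxtrace_herm_density_ge].
Qed.

End HermitianSpectrum.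

Section SignedSums.
Context {C : numClosedFieldType} {n : nat} {O : finType} (M : O -> 'M[C]_n).
Hypothesis hermM : forall i, M i = adjmx (M i).

Definition signed_mxsum (s : {ffun O -> bool}) : 'M[C]_n :=
  \sum_i (if s i then M i else - M i).

Lemma signed_mxsum_herm s : signed_mxsum s = adjmx (signed_mxsum s).
Proof.
apply/matrixP => j k; rewrite adjmxE !summxE rmorph_sum.
by apply: eq_bigr => i _; case: (s i); rewrite ?mxE ?rmorphN {1}(hermM i) adjmxE.
Qed.

Lemma mxtrace_signed_mxsum s X : \tr (signed_mxsum s *m X) =
  \sum_i (if s i then \tr (M i *m X) else - \tr (M i *m X)).
Proof.
rewrite mulmx_suml raddf_sum; apply: eq_bigr => i _.
by case: (s i); rewrite ?mulNmx ?raddfN.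
Qed.

Lemma mxtrace_signed_mxsum_le {rho sigma} s : density rho -> density sigma ->
  \tr (signed_mxsum s *m (rho - sigma)) <= dist_sum M rho sigma.
Proof.
move=> hrho hsigma; rewrite mxtrace_signed_mxsum; apply: ler_sum => i _.
have treal := mxtrace_herm_real (hermM i) (density_diff_herm hrho hsigma).
by case: (s i); rewrite ?real_ler_norm // -normrN real_ler_norm ?rpredN.
Qed.

Lemma dist_sum_signed_mxsum {rho sigma} : density rho -> density sigma ->
  exists s, \tr (signed_mxsum s *m (rho - sigma)) = dist_sum M rho sigma.
Proof.
move=> hrho hsigma; exists [ffun i => 0 <= \tr (M i *m (rho - sigma))].
rewrite mxtrace_signed_mxsum; apply: eq_bigr => i _; rewrite ffunE.
have treal := mxtrace_herm_real (hermM i) (density_diff_herm hrho hsigma).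
by case: ifP => [/ger0_norm|/negbT]; rewrite // -real_ltNge // => /ltr0_norm.
Qed.

Lemma dist_sum_max_pure : (2 <= n)%N ->
  exists psi phi : 'cV[C]_n,
    [/\ unit_vec psi, unit_vec phi, orthogonal_vec psi phi &
    forall rho sigma, density rho -> density sigma ->
      dist_sum M rho sigma <= dist_sum M (proj psi) (proj phi)].
Proof.
move=> n_ge2.
have /fin_all_exists [w hw] s : exists w : 'cV[C]_n * 'cV[C]_n,
    [/\ unit_vec w.1, unit_vec w.2, orthogonal_vec w.1 w.2 &
    forall rho sigma, density rho -> density sigma ->
      \tr (signed_mxsum s *m (rho - sigma)) <=
      \tr (signed_mxsum s *m (proj w.1 - proj w.2))].
  have [psi [phi hpp]] := herm_pure_diff_max (signed_mxsum_herm s) n_ge2.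
  by exists (psi, phi).
pose gap s := \tr (signed_mxsum s *m (proj (w s).1 - proj (w s).2)).
have pure_density s : density (proj (w s).1) /\ density (proj (w s).2).
  by have [u1 u2 _ _] := hw s; split; apply: proj_density.
have gap_real s : gap s \is Num.real.
  have [d1 d2] := pure_density s.
  exact: mxtrace_herm_real (signed_mxsum_herm s) (density_diff_herm d1 d2).
have [sM gap_sM] := real_argmax [ffun=> true] gap gap_real.
have [u1 u2 orth12 _] := hw sM; have [d1 d2] := pure_density sM.
exists (w sM).1, (w sM).2; split=> // rho sigma hrho hsigma.
have [s <-] := dist_sum_signed_mxsum hrho hsigma.
have [_ _ _ max_s] := hw s.
have pure_ge := mxtrace_signed_mxsum_le sM d1 d2.
exact: le_trans (le_trans (max_s _ _ hrho hsigma) (gap_sM s)) pure_ge.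
Qed.

End SignedSums.

Theorem mainTheorem7 (R : realType) (n : nat) (hn : (2 <= n)%N) (O : finType)
  (M : O -> 'M[R[i]]_n) (hM : POVM M) :
  exists K : R[i], is_max (Kvals M) K /\ is_max (PureVals M) (2 * K).
Proof.
have hermM i : M i = adjmx (M i) by case: (proj1 hM i).
have [psi [phi [unit_psi unit_phi orth max_pure]]] := dist_sum_max_pure M hermM hn.
have [d_psi d_phi] := (proj_density unit_psi, proj_density unit_phi).
exists (2^-1 * dist_sum M (proj psi) (proj phi)); split.
  split; first by exists (proj psi), (proj phi).
  move=> _ [rho [sigma [hrho [hsigma ->]]]].
  by apply: ler_wpM2l; [rewrite invr_ge0 ler0n|apply: max_pure].
rewrite mulrA mulfV ?pnatr_eq0 // mul1r; split; first by exists psi, phi.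
move=> _ [psi' [phi' [unit_psi' [unit_phi' [_ ->]]]]].
by apply: max_pure; apply: proj_density.
Qed.
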